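(* For every integer $d\ge2$ with $d \notin \{2\} \cup 4\mathbb N$, we have $J_d/d \in \mathsf O_{d,2} \setminus \mathsf O_{d,1}$, where $J_d$ is the $d\times d$ all-ones matrix.
   Context: For integers $d\ge2$, $s\ge1$ and $U\in M_{ds}(\mathbb C)$ viewed as a $d\times d$ block matrix with blocks $U_{ij}\in M_s(\mathbb C)$, set $\phi_{d,s}(U)=\big(\tfrac1s\|U_{ij}\|_F^2\big)_{i,j=1}^d$ with $\|X\|_F=\operatorname{Tr}(XX^* )^{1/2}$. Define $\mathsf O_{d,s}:=\phi_{d,s}(\mathcal O(ds))$, where $\mathcal O(n)$ is the group of $n\times n$ real orthogonal matrices. $4\mathbb N$ denotes the positive multiples of $4$. *)

From HB Require Import structures.
From mathcomp Require Import all_boot all_order all_algebra.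
From mathcomp Require Import reals.
Set Implicit Arguments. Unset Strict Implicit. Unset Printing Implicit Defensive.
Import Order.TTheory GRing.Theory Num.Theory.
Local Open Scope ring_scope.

Definition orthogonal_mx (R : realType) (n : nat) (U : 'M[R]_n) : Prop :=
  U *m U^T = 1%:M.

Lemma block_idx_proof (d s : nat) (i : 'I_d) (a : 'I_s) : (i * s + a < d * s)%N.
Proof.
case: i => i /= Hi; case: a => a /= Ha.
apply: (@leq_trans ((i.+1) * s)); first by rewrite mulSn addnC ltn_add2r.
by rewrite leq_mul2r Hi orbT.
Qed.

(* Global index of entry a of block i in a d x d block matrix with s x s blocks. *)
Definition block_idx (d s : nat) (i : 'I_d) (a : 'I_s) : 'I_(d * s) :=
  Ordinal (block_idx_proof i a).

(* phi_{d,s}(U)_{ij} = (1/s) ||U_{ij}||_F^2; for real U, ||X||_F^2 is the sum of squares. *)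
Definition phi_ds (R : realType) (d s : nat) (U : 'M[R]_(d * s)) : 'M[R]_d :=
  \matrix_(i < d, j < d)
    (s%:R^-1 * \sum_(a < s) \sum_(b < s) (U (block_idx i a) (block_idx j b)) ^+ 2).

Definition in_O_ds (R : realType) (d s : nat) (M : 'M[R]_d) : Prop :=
  exists U : 'M[R]_(d * s), orthogonal_mx U /\ phi_ds U = M.

Definition Jd_over_d (R : realType) (d : nat) : 'M[R]_d := const_mx (d%:R^-1).

From HB Require Import structures.
From mathcomp Require Import all_boot all_order all_algebra reals trigo.
From mathcomp Require Import ring lra zify.
Set Implicit Arguments. Unset Strict Implicit. Unset Printing Implicit Defensive.
Import Order.TTheory GRing.Theory Num.Theory.
Local Open Scope ring_scope.

(* J_d/d is the image of the 2d x 2d orthogonal matrix whose (i, j) block is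
   d^(-1/2) times the rotation by 2 pi i j / d (the real form of the unitary
   Fourier matrix): its block rows are orthonormal because, for i <> i', the
   powers of a nontrivial rotation of order dividing d sum to zero.
   Conversely, a d x d orthogonal U with phi(U) = J_d/d has all entries equal
   to +-d^(-1/2), so sqrt d * U is a Hadamard matrix; for three of its rows
   h0, h1, h2 each term (h0 k + h1 k) (h0 k + h2 k) is 0 or 4, while
   orthogonality makes their sum equal to d, hence 4 | d. *)

Section BlockIndex.
Variables d s : nat.
Implicit Types (p : 'I_(d * s)) (i : 'I_d) (a : 'I_s).

Lemma block_row_subproof p : (p %/ s < d)%N.
Proof. by case: s p => [|s'] [p /=]; rewrite ?muln0 // ltn_divLR. Qed.

Lemma block_col_subproof p : (p %% s < s)%N.
Proof. by case: s p => [|s'] [p /=]; rewrite ?muln0 // ltn_mod. Qed.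

Definition block_row p : 'I_d := Ordinal (block_row_subproof p).
Definition block_col p : 'I_s := Ordinal (block_col_subproof p).

Lemma block_idxK p : block_idx (block_row p) (block_col p) = p.
Proof. by apply: val_inj; rewrite /= -divn_eq. Qed.

Lemma block_rowK i a : block_row (block_idx i a) = i.
Proof.
have s_gt0 : (0 < s)%N by apply: leq_ltn_trans (ltn_ord a).
by apply: val_inj; rewrite /= divnMDl // divn_small ?addn0.
Qed.

Lemma block_colK i a : block_col (block_idx i a) = a.
Proof. by apply: val_inj; rewrite /= modnMDl modn_small. Qed.

Lemma eq_block_idx i a i' a' :
  (block_idx i a == block_idx i' a') = (i == i') && (a == a').
Proof.
apply/eqP/andP => [e | [/eqP-> /eqP->] //].
by rewrite -(block_rowK i a) -{2}(block_colK i a) e block_rowK block_colK.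
Qed.

Lemma big_block_idx (R : Type) (idx : R) (op : Monoid.com_law idx)
    (F : 'I_(d * s) -> R) :
  \big[op/idx]_p F p = \big[op/idx]_i \big[op/idx]_a F (block_idx i a).
Proof.
rewrite pair_big (reindex (fun ia : 'I_d * 'I_s => block_idx ia.1 ia.2)) //=.
exists (fun p => (block_row p, block_col p)) => [[i a] | p] _ /=.
  by rewrite block_rowK block_colK.
exact: block_idxK.
Qed.

Definition mx_of_blocks (R : Type) (B : 'I_d -> 'I_d -> 'M[R]_s) : 'M[R]_(d * s) :=
  \matrix_(p, q) B (block_row p) (block_row q) (block_col p) (block_col q).

Lemma mx_of_blocksE (R : Type) (B : 'I_d -> 'I_d -> 'M[R]_s) i j a b :
  mx_of_blocks B (block_idx i a) (block_idx j b) = B i j a b.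
Proof. by rewrite mxE !block_rowK !block_colK. Qed.

Lemma mx_of_blocks_orthogonal (R : realType) (B : 'I_d -> 'I_d -> 'M[R]_s) :
  (forall i i', \sum_j B i j *m (B i' j)^T = (i == i')%:R%:M) ->
  orthogonal_mx (mx_of_blocks B).
Proof.
move=> Borth; apply/matrixP => p p'.
rewrite -[p]block_idxK -[p']block_idxK.
move: (block_row p) (block_col p) (block_row p') (block_col p') => i a i' a'.
rewrite !mxE eq_block_idx big_block_idx.
have := congr1 (fun M : 'M[R]_s => M a a') (Borth i i').
rewrite summxE !mxE -[_ *+ (a == a')]mulr_natr -natrM mulnb => <-; apply: eq_bigr => j _.
rewrite mxE; apply: eq_bigr => b _.
by rewrite [_^T _ _]mxE !mx_of_blocksE mxE.
Qed.

End BlockIndex.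

Lemma cos_lt1 (R : realType) (x : R) : 0 < x < pi *+ 2 -> cos x < 1.
Proof.
move=> /andP[x_gt0 x_lt2pi].
have sin_gt0 : 0 < sin (x / 2).
  apply: sin_gt0_pi; apply/andP; split; first by rewrite divr_gt0.
  by rewrite ltr_pdivrMr // mulr_natr.
have -> : x = (x / 2) *+ 2 by rewrite -mulr_natr divfK ?pnatr_eq0.
rewrite cos_mulr2n cos2sin2.
have := exprn_gt0 2 sin_gt0; lra.
Qed.

Section Rotation.
Variable R : realType.
Implicit Types t u : R.

Definition rot t : 'M[R]_2 :=
  \matrix_(a, b) if a == b then cos t else if (a < b)%N then - sin t else sin t.

Lemma rot0 : rot 0 = 1.
Proof.
apply/matrixP => a b; rewrite !mxE cos0 sin0 oppr0.
by case: a b => [[|[|//]] ?] [[|[|//]] ?].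
Qed.

Lemma rotD t u : rot (t + u) = rot t *m rot u.
Proof.
apply/matrixP => a b; rewrite !mxE !big_ord_recl big_ord0 !mxE cosD sinD.
by case: a b => [[|[|//]] ?] [[|[|//]] ?] /=; ring.
Qed.

Lemma tr_rot t : (rot t)^T = rot (- t).
Proof.
apply/matrixP => a b; rewrite !mxE cosN sinN opprK.
by case: a b => [[|[|//]] ?] [[|[|//]] ?].
Qed.

Lemma rotMn n t : rot (n%:R * t) = rot t ^+ n.
Proof.
elim: n => [|n IHn]; first by rewrite mul0r rot0.
by rewrite mulrS mulrDl mul1r rotD IHn exprS.
Qed.

Lemma rot_2pi : rot (pi *+ 2) = 1.
Proof.
apply/matrixP => a b; rewrite !mxE cos2pi sin2pi oppr0.
by case: a b => [[|[|//]] ?] [[|[|//]] ?].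
Qed.

Lemma rot_frobenius t : \sum_a \sum_b rot t a b ^+ 2 = 2.
Proof.
rewrite !big_ord_recl !big_ord0 !mxE /=.
by have := cos2Dsin2 t; lra.
Qed.

Lemma rot_subr1_gram t : (rot t - 1)^T *m (rot t - 1) = (2 * (1 - cos t))%:M.
Proof.
apply/matrixP => a b; rewrite !mxE !big_ord_recl big_ord0 !mxE.
have := cos2Dsin2 t.
by case: a b => [[|[|//]] ?] [[|[|//]] ?] /=; lra.
Qed.

Lemma sum_rot_expr_eq0 n t :
  cos t != 1 -> rot t ^+ n = 1 -> \sum_(j < n) rot t ^+ j = 0.
Proof.
move=> cos_neq1 rot_n.
have : (rot t - 1) *m \sum_(j < n) rot t ^+ j = 0 by rewrite mulmxE -subrX1 rot_n subrr.
move/(congr1 (mulmx (rot t - 1)^T)); rewrite mulmxA rot_subr1_gram mulmx0.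
rewrite mul_scalar_mx => /eqP; rewrite scalemx_eq0 => /orP[|/eqP //].
by rewrite mulf_eq0 pnatr_eq0 subr_eq0 [1 == _]eq_sym (negbTE cos_neq1).
Qed.

End Rotation.

Section FourierMatrix.
Variables (R : realType) (d : nat).
Hypothesis d_gt0 : (0 < d)%N.

Let theta : R := pi *+ 2 / d%:R.

Let dR_gt0 : 0 < d%:R :> R. Proof. by rewrite ltr0n. Qed.

Definition fourier_block (i j : 'I_d) : 'M[R]_2 :=
  Num.sqrt d%:R^-1 *: rot (i%:R * j%:R * theta).

Lemma fourier_block_gram (i i' j : 'I_d) :
  fourier_block i j *m (fourier_block i' j)^T
  = d%:R^-1 *: rot ((i%:R - i'%:R) * theta) ^+ j.
Proof.
rewrite /fourier_block linearZ /= -scalemxAl -scalemxAr scalerA -expr2.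
rewrite sqr_sqrtr ?invr_ge0 ?ler0n // tr_rot -rotD -rotMn.
by congr (_ *: rot _); ring.
Qed.

Lemma rot_fourier_order (i i' : 'I_d) :
  rot ((i%:R - i'%:R) * theta) ^+ d = 1.
Proof.
have rot_2pi_mult n : rot (n%:R * (pi *+ 2)) = 1 by rewrite rotMn rot_2pi expr1n.
rewrite -rotMn.
have -> : d%:R * ((i%:R - i'%:R) * theta) = i%:R * (pi *+ 2) - i'%:R * (pi *+ 2).
  by rewrite /theta; field; rewrite gt_eqF.
by rewrite rotD -tr_rot !rot_2pi_mult trmx1 mulmx1.
Qed.

Lemma cos_fourier_neq1 (i i' : 'I_d) :
  i != i' -> cos ((i%:R - i'%:R) * theta) != 1.
Proof.
move=> neq_ii'; rewrite -cos_norm lt_eqF // cos_lt1 //.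
have theta_gt0 : 0 < theta by rewrite divr_gt0 // mulrn_wgt0 // pi_gt0.
rewrite normrM (gtr0_norm theta_gt0) pmulr_lgt0 // normr_gt0 subr_eq0 eqr_nat neq_ii' /=.
have -> : pi *+ 2 = d%:R * theta by rewrite /theta mulrC divfK // gt_eqF.
rewrite ltr_pM2r // ltr_norml.
have := ltn_ord i; have := ltn_ord i'; rewrite -!(ltr_nat R).
have := ler0n R i; have := ler0n R i'; lra.
Qed.

Lemma fourier_rows_orthogonal (i i' : 'I_d) :
  \sum_j fourier_block i j *m (fourier_block i' j)^T = (i == i')%:R%:M.
Proof.
under eq_bigr do rewrite fourier_block_gram.
rewrite -scaler_sumr; have [<- | neq_ii'] := eqVneq i i'.
  rewrite subrr mul0r rot0; under eq_bigr do rewrite expr1n.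
  by rewrite sumr_const card_ord -scaler_nat scalerA mulVf ?scale1r // gt_eqF.
by rewrite sum_rot_expr_eq0 ?scaler0 ?cos_fourier_neq1 ?rot_fourier_order // raddf0.
Qed.

Lemma Jd_in_O2 : in_O_ds 2 (Jd_over_d R d).
Proof.
exists (mx_of_blocks fourier_block); split.
  exact/mx_of_blocks_orthogonal/fourier_rows_orthogonal.
apply/matrixP => i j; rewrite !mxE.
under eq_bigr do under eq_bigr do rewrite mx_of_blocksE mxE exprMn.
under eq_bigr do rewrite -mulr_sumr.
rewrite -mulr_sumr rot_frobenius sqr_sqrtr ?invr_ge0 ?ler0n //.
by rewrite mulrCA mulVf ?mulr1 ?pnatr_eq0.
Qed.

End FourierMatrix.

Lemma sign_sum_mul (R : numDomainType) (x y z : R) :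
  x ^+ 2 = 1 -> y ^+ 2 = 1 -> z ^+ 2 = 1 ->
  (x + y) * (x + z) = 4 * ((x == y) && (x == z))%:R.
Proof.
move=> /eqP + /eqP + /eqP; rewrite !sqrf_eq1.
by move=> /orP[]/eqP-> /orP[]/eqP-> /orP[]/eqP->;
  rewrite ?eqxx ?(eq_sym 1 (-1)) ?eqNr ?oner_eq0 /=; ring.
Qed.

Lemma hadamard_dvd4 (R : numDomainType) m n (H : 'M[R]_(m, n)) :
  (2 < m)%N -> (forall i j, H i j ^+ 2 = 1) -> H *m H^T = n%:R%:M ->
  (4 %| n)%N.
Proof.
move=> m_gt2 H_sign H_orth.
have row_dot i i' : \sum_k H i k * H i' k = n%:R *+ (i == i').
  have := congr1 (fun M : 'M_m => M i i') H_orth; rewrite !mxE => <-.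
  by apply: eq_bigr => k _; rewrite mxE.
pose i0 : 'I_m := Ordinal (ltnW (ltnW m_gt2)).
pose i1 : 'I_m := Ordinal (ltnW m_gt2).
pose i2 : 'I_m := Ordinal m_gt2.
have : n%:R = \sum_k (H i0 k + H i1 k) * (H i0 k + H i2 k).
  transitivity (\sum_k H i0 k * H i0 k + \sum_k H i0 k * H i2 k
                + \sum_k H i1 k * H i0 k + \sum_k H i1 k * H i2 k).
    by rewrite !row_dot /= !addr0.
  by rewrite -!big_split; apply: eq_bigr => k _ /=; ring.
under eq_bigr do rewrite sign_sum_mul //.
rewrite -mulr_sumr -natr_sum -natrM => /eqP; rewrite eqr_nat => /eqP ->.
exact: dvdn_mulr.
Qed.

Lemma Jd_notin_O1 (R : realType) d :
  (2 < d)%N -> ~~ (4 %| d)%N -> ~ in_O_ds 1 (Jd_over_d R d).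
Proof.
move=> d_gt2 d_ndvd4 [U [U_orth phiU]].
have dR_gt0 : 0 < d%:R :> R by rewrite ltr0n ltnW // ltnW.
have U_sq p q : U p q ^+ 2 = d%:R^-1.
  have := congr1 (fun M : 'M_d => M (block_row p) (block_row q)) phiU.
  rewrite !mxE !big_ord1 invr1 mul1r => <-.
  by congr (U _ _ ^+ 2); apply: val_inj; rewrite /= divn1 addn0 [RHS]muln1.
move/negP: d_ndvd4; apply; rewrite -[d]muln1.
apply: (@hadamard_dvd4 _ _ _ (Num.sqrt d%:R *: U)); first by rewrite muln1.
  by move=> p q; rewrite mxE exprMn sqr_sqrtr ?ler0n // U_sq mulfV // gt_eqF.
rewrite linearZ -scalemxAl -scalemxAr scalerA -expr2 sqr_sqrtr ?ler0n //.
by rewrite U_orth scale_scalar_mx mulr1 muln1.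
Qed.

Theorem corollary4p3 (R : realType) (d : nat) :
  (2 <= d)%N -> d <> 2%N -> ~~ (4 %| d)%N ->
  in_O_ds 2 (Jd_over_d R d) /\ ~ in_O_ds 1 (Jd_over_d R d).
Proof.
move=> d_ge2 d_neq2 d_ndvd4; split; first exact/Jd_in_O2/ltnW.
by apply: Jd_notin_O1 => //; lia.
Qed.
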